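(* Let $x,y\ge 0$ not both zero, and $z,p>0$ (the approximation is intended for the regime $x,y\ll z,p$). Let $a=(x+y)/2$ and $g=\sqrt{xy}$. Then $$R_J(x,y,z,p)=\frac{3}{2\sqrt z\,p}\left[\ln\frac{8z}{a+g}-2R_C\!\left(1,\frac pz\right)+\frac\theta p\ln\frac{2p}{a+g}\right],$$ where $\frac{g}{1-g/p}<\theta<\frac{a}{1-a/p}\left(1+\frac{p}{2z}\right)$.
   Context: For $x,y,z\ge 0$ with at most one zero and $p>0$: $R_J(x,y,z,p)=\frac32\int_0^\infty[(t+x)(t+y)(t+z)]^{-1/2}(t+p)^{-1}\,dt$. For $x\ge0$, $y>0$: $R_C(x,y)=\frac12\int_0^\infty(t+x)^{-1/2}(t+y)^{-1}\,dt$.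
   Formalization: The identity is asserted only when $a<p$, that is (x+y)/2 < p, and states that some θ in the given open interval satisfies it. The paper assumes this as well. *)

From Stdlib Require Import Reals.
From Coquelicot Require Import Coquelicot.
Open Scope R_scope.

(* The improper integral is taken with lower limit 0^+ (filter at_right 0),
   so that an integrable singularity at t = 0 (one of x,y,z zero) is allowed. *)
Definition RJ (x y z p : R) : R :=
  3 / 2 * RInt_gen
    (fun t => / sqrt ((t + x) * (t + y) * (t + z)) * / (t + p))
    (at_right 0) (Rbar_locally p_infty).

Definition RC (x y : R) : R :=
  1 / 2 * RInt_gen
    (fun t => / sqrt (t + x) * / (t + y))
    (at_right 0) (Rbar_locally p_infty).

From Stdlib Require Import Reals Lra Psatz Classical.
From Coquelicot Require Import Coquelicot.
Open Scope R_scope.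

(* Put Q(t) = sqrt((t+x)(t+y)) and k(t) = sqrt z p / (sqrt(t+z) (t+p)).  Then sqrt z p times
   the integrand of R_J is k/Q, and the integrand of R_C(1, p/z), rescaled by t -> t/z, is k/p.
   The function sqrt z/(t sqrt(t+z)) + 1/Q - 1/t is the derivative of
   ln(t + a + Q) - 2 ln(sqrt(t+z) + sqrt z), so it integrates to ln(8z/(a+g)), and
   k/Q + k/p minus it is (1 - k)(1/t - 1/Q).  This remainder lies strictly between
   g/((t+g)(t+p)) and (1 + p/(2z)) a/((t+a)(t+p)), whose integrals are g/(p-g) ln(p/g) and
   (1 + p/(2z)) a/(p-a) ln(p/a); as ln(p/a) <= ln(2p/(a+g)) <= ln(p/g), theta is p times the
   remainder integral divided by ln(2p/(a+g)). *)

Notation is_RInt_0_pinfty f l :=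
  (is_RInt_gen f (at_right 0) (Rbar_locally p_infty) l).

Lemma filter_prod_0_pinfty_intro (P : R * R -> Prop) d M : 0 < d ->
  (forall u v, 0 < u < d -> M < v -> P (u, v)) ->
  filter_prod (at_right 0) (Rbar_locally p_infty) P.
Proof.
  intros Hd HP.
  apply Filter_prod with (fun u => 0 < u < d) (fun v => M < v); auto.
  - exists (mkposreal d Hd). intros u Hu Hu0. split; [exact Hu0|].
    apply Rabs_def2 in Hu. simpl in Hu. unfold minus, plus, opp in Hu; simpl in Hu. lra.
  - exists M. auto.
Qed.

Lemma filter_prod_0_pinfty_elim (P : R * R -> Prop) d M : 0 < d ->
  filter_prod (at_right 0) (Rbar_locally p_infty) P ->
  exists u v, 0 < u < d /\ M < v /\ P (u, v).
Proof.
  intros Hd [Q1 Q2 [e He] [M0 HM] HP].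
  set (u := Rmin (e / 2) (d / 2)).
  assert (Hu : 0 < u) by (apply Rmin_pos; destruct e; simpl; lra).
  assert (Hue : u <= e / 2) by apply Rmin_l.
  assert (Hud : u <= d / 2) by apply Rmin_r.
  exists u, (Rmax M M0 + 1).
  assert (M <= Rmax M M0) by apply Rmax_l.
  assert (M0 <= Rmax M M0) by apply Rmax_r.
  repeat split; try lra.
  apply HP; [apply He; [|lra] | apply HM; lra].
  apply Rabs_def1; simpl; unfold minus, plus, opp; simpl; destruct e; simpl in *; lra.
Qed.

Lemma filter_prod_0_pinfty_between (P : R -> Prop) :
  (forall t, 0 < t -> P t) ->
  filter_prod (at_right 0) (Rbar_locally p_infty)
    (fun uv => forall t, Rmin (fst uv) (snd uv) <= t <= Rmax (fst uv) (snd uv) -> P t).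
Proof.
  intros HP. apply filter_prod_0_pinfty_intro with 1 1; [lra|].
  intros u v Hu Hv t Ht. simpl in Ht. apply HP.
  assert (0 < Rmin u v) by (apply Rmin_glb_lt; lra). lra.
Qed.

Lemma is_RInt_0_pinfty_ext (f g : R -> R) l :
  (forall t, 0 < t -> f t = g t) -> is_RInt_0_pinfty f l -> is_RInt_0_pinfty g l.
Proof.
  intros Hfg. apply is_RInt_gen_ext.
  eapply filter_imp; [|exact (filter_prod_0_pinfty_between _ Hfg)].
  intros uv Huv t Ht. apply Huv. lra.
Qed.

Lemma is_RInt_0_pinfty_RInt_gen (f : R -> R) l :
  is_RInt_0_pinfty f l -> RInt_gen f (at_right 0) (Rbar_locally p_infty) = l.
Proof.
  apply (@is_RInt_gen_unique R_CompleteNormedModule); apply Proper_StrongProper.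
  - apply at_right_proper_filter.
  - apply Rbar_locally_filter.
Qed.

Lemma is_RInt_0_pinfty_derive (f F : R -> R) la lb :
  (forall t, 0 < t -> is_derive F t (f t)) ->
  (forall t, 0 < t -> continuous f t) ->
  filterlim F (at_right 0) (locally la) ->
  filterlim F (Rbar_locally p_infty) (locally lb) ->
  is_RInt_0_pinfty f (lb - la).
Proof.
  intros HF Hf Ha Hb.
  apply is_RInt_0_pinfty_ext with (Derive F).
  { intros t Ht. now apply is_derive_unique, HF. }
  apply is_RInt_gen_Derive; auto.
  - apply filter_prod_0_pinfty_between. intros t Ht. eexists. now apply HF.
  - apply filter_prod_0_pinfty_between. intros t Ht.
    apply continuous_ext_loc with f; [|now apply Hf].
    exists (mkposreal t Ht). intros s Hs. apply Rabs_def2 in Hs. simpl in Hs.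
    unfold minus, plus, opp in Hs; simpl in Hs. symmetry. apply is_derive_unique, HF. lra.
Qed.

Lemma ex_RInt_pos (f : R -> R) u v :
  (forall t, 0 < t -> continuous f t) -> 0 < u -> 0 < v -> ex_RInt f u v.
Proof.
  intros Hf Hu Hv. apply (@ex_RInt_continuous R_CompleteNormedModule).
  intros t Ht. apply Hf.
  assert (0 < Rmin u v) by (apply Rmin_glb_lt; lra). lra.
Qed.

Section NonnegativeIntegrand.

Variable f : R -> R.
Hypothesis f_cont : forall t, 0 < t -> continuous f t.
Hypothesis f_ge0 : forall t, 0 < t -> 0 <= f t.

Lemma RInt_le_subinterval u u0 v0 v :
  0 < u -> u <= u0 -> u0 <= v0 -> v0 <= v -> RInt f u0 v0 <= RInt f u v.
Proof.
  intros Hu Huu0 Hu0v0 Hv0v.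
  assert (E1 := RInt_Chasles f u u0 v0 (ex_RInt_pos f u u0 f_cont ltac:(lra) ltac:(lra))
                  (ex_RInt_pos f u0 v0 f_cont ltac:(lra) ltac:(lra))).
  assert (E2 := RInt_Chasles f u v0 v (ex_RInt_pos f u v0 f_cont ltac:(lra) ltac:(lra))
                  (ex_RInt_pos f v0 v f_cont ltac:(lra) ltac:(lra))).
  unfold plus in E1, E2; simpl in E1, E2.
  assert (0 <= RInt f u u0).
  { apply RInt_ge_0; [lra | apply ex_RInt_pos; auto; lra | intros; apply f_ge0; lra]. }
  assert (0 <= RInt f v0 v).
  { apply RInt_ge_0; [lra | apply ex_RInt_pos; auto; lra | intros; apply f_ge0; lra]. }
  lra.
Qed.

Lemma RInt_le_is_RInt_0_pinfty l u v :
  is_RInt_0_pinfty f l -> 0 < u <= v -> RInt f u v <= l.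
Proof.
  intros Hl Huv.
  destruct (Rle_or_lt (RInt f u v) l) as [|Hlt]; [assumption|exfalso].
  assert (He : 0 < RInt f u v - l) by lra.
  destruct (filter_prod_0_pinfty_elim _ u v ltac:(lra)
              (Hl (ball l (mkposreal _ He)) (locally_ball _ _)))
    as [u' [v' [Hu' [Hv' [w [Hw Hwl]]]]]].
  simpl in Hw. apply (@is_RInt_unique R_CompleteNormedModule) in Hw.
  assert (RInt f u v <= RInt f u' v') by (apply RInt_le_subinterval; lra).
  apply Rabs_def2 in Hwl. simpl in Hwl. unfold minus, plus, opp in Hwl; simpl in Hwl.
  lra.
Qed.

End NonnegativeIntegrand.

Lemma is_RInt_0_pinfty_gt0 (f : R -> R) l :
  (forall t, 0 < t -> continuous f t) -> (forall t, 0 < t -> 0 < f t) ->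
  is_RInt_0_pinfty f l -> 0 < l.
Proof.
  intros Hc Hf Hl.
  apply Rlt_le_trans with (RInt f 1 2).
  2:{ apply (RInt_le_is_RInt_0_pinfty f Hc); [intros t Ht; left; auto | exact Hl | lra]. }
  assert (H0 : RInt (fun _ => 0) 1 2 = 0) by (rewrite RInt_const; apply Rmult_0_r).
  rewrite <- H0. apply RInt_lt; try lra.
  - intros; apply Hc; lra.
  - intros; apply continuous_const.
  - intros; apply Hf; lra.
Qed.

(* The integral is the supremum of the integrals over compact subintervals. *)
Lemma ex_RInt_0_pinfty_le (f h : R -> R) lh :
  (forall t, 0 < t -> continuous f t) -> (forall t, 0 < t -> 0 <= f t) ->
  (forall t, 0 < t -> f t <= h t) -> (forall t, 0 < t -> continuous h t) ->
  is_RInt_0_pinfty h lh -> exists l, is_RInt_0_pinfty f l.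
Proof.
  intros Hf Hf0 Hfh Hh Hlh.
  set (E := fun w => exists u v, 0 < u <= v /\ w = RInt f u v).
  destruct (completeness E) as [l [Hub Hlub]].
  - exists lh. intros w [u [v [Huv ->]]].
    apply Rle_trans with (RInt h u v).
    + apply RInt_le; [lra | apply ex_RInt_pos; auto; lra
                    | apply ex_RInt_pos; auto; lra | intros; apply Hfh; lra].
    + apply (RInt_le_is_RInt_0_pinfty h); auto; try lra.
      intros t Ht. apply Rle_trans with (f t); auto.
  - exists (RInt f 1 1), 1, 1. split; [lra | reflexivity].
  - exists l. intros P [eps HP].
    assert (Hex : exists u0 v0, 0 < u0 <= v0 /\ l - eps < RInt f u0 v0).
    { apply NNPP. intros Hn.
      assert (l <= l - eps) by (apply Hlub; intros w [u [v [Huv ->]]];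
        apply Rnot_lt_le; intros Hlt; apply Hn; exists u, v; auto).
      destruct eps; simpl in *; lra. }
    destruct Hex as [u0 [v0 [Huv0 Hlt]]].
    apply filter_prod_0_pinfty_intro with u0 v0; [lra|].
    intros u v Hu Hv. exists (RInt f u v). split.
    + apply (@RInt_correct R_CompleteNormedModule), ex_RInt_pos; auto; lra.
    + apply HP. assert (RInt f u0 v0 <= RInt f u v) by (apply RInt_le_subinterval; auto; lra).
      assert (RInt f u v <= l) by (apply Hub; exists u, v; split; auto; lra).
      apply Rabs_def1; simpl; unfold minus, plus, opp; simpl; lra.
Qed.

Lemma is_RInt_0_pinfty_lt (f g : R -> R) lf lg :
  (forall t, 0 < t -> continuous f t) -> (forall t, 0 < t -> continuous g t) ->
  (forall t, 0 < t -> f t < g t) ->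
  is_RInt_0_pinfty f lf -> is_RInt_0_pinfty g lg -> lf < lg.
Proof.
  intros Hf Hg Hfg Hlf Hlg.
  assert (Hcont : forall t, 0 < t -> continuous (fun t => g t - f t) t).
  { intros t Ht. apply (continuous_minus g f); auto. }
  assert (Hpos : forall t, 0 < t -> 0 < g t - f t) by (intros t Ht; specialize (Hfg t Ht); lra).
  assert (0 < lg - lf); [|lra].
  apply (is_RInt_0_pinfty_gt0 (fun t => g t - f t)); auto.
  exact (is_RInt_gen_minus g f lg lf Hlg Hlf).
Qed.

Lemma is_RInt_0_pinfty_comp_scal (f : R -> R) l lam : 0 < lam ->
  is_RInt_0_pinfty f l -> is_RInt_0_pinfty (fun t => lam * f (lam * t)) l.
Proof.
  intros Hlam Hl P HP.
  destruct (Hl P HP) as [Q1 Q2 [e He] [M HM] HQ].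
  apply Filter_prod with (fun u => Q1 (lam * u)) (fun v => Q2 (lam * v)).
  - assert (He' : 0 < e / lam) by (apply Rdiv_lt_0_compat; [apply cond_pos | lra]).
    exists (mkposreal _ He'). intros u Hu Hu0. apply He; [|nra].
    apply Rabs_def2 in Hu. simpl in Hu. unfold minus, plus, opp in Hu; simpl in Hu.
    apply Rabs_def1; simpl; unfold minus, plus, opp; simpl;
      apply Rmult_lt_reg_r with (/ lam); try (apply Rinv_0_lt_compat; lra);
      field_simplify; lra.
  - exists (M / lam). intros v Hv. apply HM.
    apply Rmult_lt_reg_r with (/ lam); [apply Rinv_0_lt_compat; lra|].
    field_simplify; lra.
  - intros u v Hu Hv. destruct (HQ _ _ Hu Hv) as [w [Hw Pw]].
    exists w. split; [|exact Pw]. simpl in *.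
    assert (Hw' : is_RInt f (lam * u + 0) (lam * v + 0) w) by now rewrite !Rplus_0_r.
    apply is_RInt_comp_lin in Hw'.
    eapply is_RInt_ext; [|exact Hw']. intros t _. simpl. now rewrite Rplus_0_r.
Qed.

Lemma filterlim_at_right_continuous (F : R -> R) :
  continuous F 0 -> filterlim F (at_right 0) (locally (F 0)).
Proof.
  intros HF. eapply filterlim_filter_le_1; [|exact HF].
  intros P [e He]. exists e. intros t Ht _. now apply He.
Qed.

(* Substituting u = / sqrt t rather than / t makes the limit function in
   [log_primitive_at_pinfty] smooth at u = 0: sqrt z / sqrt t occurs there. *)
Lemma filterlim_pinfty_inv_sqrt (F H : R -> R) :
  (forall t, 0 < t -> F t = H (/ sqrt t)) -> continuous H 0 ->
  filterlim F (Rbar_locally p_infty) (locally (H 0)).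
Proof.
  intros HF HH.
  apply filterlim_ext_loc with (fun t => H (/ sqrt t)).
  - exists 0. intros t Ht. symmetry. apply HF. lra.
  - eapply filterlim_comp; [|exact HH].
    apply (is_lim_inv sqrt p_infty p_infty); [|discriminate].
    apply is_lim_sqrt_p, is_lim_id.
Qed.

Lemma inv_sqrt_sqr t : 0 < t -> / sqrt t * / sqrt t = / t.
Proof.
  intros Ht. rewrite <- Rinv_mult, sqrt_sqrt; lra.
Qed.

Lemma is_RInt_0_pinfty_inv_linear_prod c p : 0 < c < p ->
  is_RInt_0_pinfty (fun t => c / ((t + c) * (t + p))) (c / (p - c) * ln (p / c)).
Proof.
  intros Hcp.
  set (F := fun t => c / (p - c) * ln ((t + c) / (t + p))).
  set (H := fun u => c / (p - c) * ln ((1 + c * (u * u)) / (1 + p * (u * u)))).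
  replace (c / (p - c) * ln (p / c)) with (H 0 - F 0).
  2:{ unfold H, F. rewrite !Rmult_0_r, !Rplus_0_r, !Rplus_0_l, Rdiv_1_l, Rinv_1, ln_1.
      rewrite !ln_div by lra. ring. }
  apply is_RInt_0_pinfty_derive with F.
  - intros t Ht. unfold F. auto_derive.
    + repeat split; [lra | apply Rdiv_lt_0_compat; lra].
    + field. lra.
  - intros t Ht. apply (ex_derive_continuous (V := R_NormedModule)). auto_derive. nra.
  - apply filterlim_at_right_continuous, (ex_derive_continuous (V := R_NormedModule)).
    unfold F. auto_derive.
    repeat split; [lra | apply Rdiv_lt_0_compat; lra].
  - apply filterlim_pinfty_inv_sqrt.
    + intros t Ht. unfold F, H. rewrite inv_sqrt_sqr by exact Ht.
      do 2 f_equal. field. lra.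
    + apply (ex_derive_continuous (V := R_NormedModule)). unfold H. auto_derive.
      rewrite !Rmult_0_l, !Rmult_0_r, !Rplus_0_r. lra.
Qed.

Lemma is_RInt_0_pinfty_inv_pow_3_2 :
  is_RInt_0_pinfty (fun t => / ((t + 1) * sqrt (t + 1))) 2.
Proof.
  set (F := fun t => -2 / sqrt (t + 1)).
  set (H := fun u => -2 * u / sqrt (1 + u * u)).
  replace 2 with (H 0 - F 0).
  2:{ unfold H, F. rewrite !Rmult_0_r, Rplus_0_l, Rplus_0_r, sqrt_1. field. }
  apply is_RInt_0_pinfty_derive with F.
  - intros t Ht. unfold F.
    assert (0 < sqrt (t + 1)) by (apply sqrt_lt_R0; lra).
    auto_derive; [repeat split; lra|].
    rewrite sqrt_sqrt by lra. field. lra.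
  - intros t Ht. apply (ex_derive_continuous (V := R_NormedModule)).
    assert (0 < sqrt (t + 1)) by (apply sqrt_lt_R0; lra).
    auto_derive. repeat split; nra.
  - apply filterlim_at_right_continuous, (ex_derive_continuous (V := R_NormedModule)).
    unfold F. auto_derive. rewrite Rplus_0_l, sqrt_1. repeat split; lra.
  - apply filterlim_pinfty_inv_sqrt.
    + intros t Ht. unfold F, H.
      rewrite inv_sqrt_sqr by exact Ht.
      assert (0 < / t) by (apply Rinv_0_lt_compat; lra).
      assert (0 < sqrt t) by (apply sqrt_lt_R0; lra).
      assert (0 < sqrt (1 + / t)) by (apply sqrt_lt_R0; lra).
      assert (E : sqrt (t + 1) = sqrt t * sqrt (1 + / t)).
      { rewrite <- sqrt_mult by lra. f_equal. field. lra. }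
      rewrite E. field. lra.
    + apply (ex_derive_continuous (V := R_NormedModule)). unfold H. auto_derive.
      rewrite Rmult_0_r, Rplus_0_r, sqrt_1. repeat split; lra.
Qed.

Definition rj_integrand x y z p t := / sqrt ((t + x) * (t + y) * (t + z)) * / (t + p).
Definition rc_integrand x y t := / sqrt (t + x) * / (t + y).

Lemma RJ_is_RInt_0_pinfty x y z p l :
  is_RInt_0_pinfty (rj_integrand x y z p) l -> RJ x y z p = 3 / 2 * l.
Proof. intros Hl. unfold RJ. now rewrite (is_RInt_0_pinfty_RInt_gen _ l). Qed.

Lemma RC_is_RInt_0_pinfty x y l :
  is_RInt_0_pinfty (rc_integrand x y) l -> RC x y = 1 / 2 * l.
Proof. intros Hl. unfold RC. now rewrite (is_RInt_0_pinfty_RInt_gen _ l). Qed.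

Lemma ex_RInt_0_pinfty_rc_integrand q : 0 < q ->
  exists l, is_RInt_0_pinfty (rc_integrand 1 q) l.
Proof.
  intros Hq.
  assert (Hroot : forall t, 0 < t -> 0 < sqrt (t + 1)) by (intros; apply sqrt_lt_R0; lra).
  apply ex_RInt_0_pinfty_le
    with (fun t => (1 + / q) * / ((t + 1) * sqrt (t + 1))) ((1 + / q) * 2).
  - intros t Ht. apply (ex_derive_continuous (V := R_NormedModule)).
    unfold rc_integrand. specialize (Hroot t Ht). auto_derive. repeat split; lra.
  - intros t Ht. unfold rc_integrand. specialize (Hroot t Ht).
    apply Rmult_le_pos; left; apply Rinv_0_lt_compat; lra.
  - intros t Ht. unfold rc_integrand. specialize (Hroot t Ht).
    replace ((1 + / q) * / ((t + 1) * sqrt (t + 1)))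
      with (/ sqrt (t + 1) * ((1 + / q) / (t + 1))) by (field; lra).
    apply Rmult_le_compat_l; [left; apply Rinv_0_lt_compat; lra|].
    assert (E : (1 + / q) / (t + 1) - / (t + q) = (t + q * q) / (q * (t + 1) * (t + q)))
      by (field; lra).
    assert (0 <= (t + q * q) / (q * (t + 1) * (t + q))); [|lra].
    apply Rlt_le, Rdiv_lt_0_compat; nra.
  - intros t Ht. apply (ex_derive_continuous (V := R_NormedModule)).
    specialize (Hroot t Ht). auto_derive. repeat split; nra.
  - exact (is_RInt_gen_scal _ (1 + / q) _ is_RInt_0_pinfty_inv_pow_3_2).
Qed.

Definition log_primitive x y z t :=
  ln (t + (x + y) / 2 + sqrt ((t + x) * (t + y))) - 2 * ln (sqrt (t + z) + sqrt z).
Definition log_integrand x y z t :=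
  sqrt z / (t * sqrt (t + z)) + / sqrt ((t + x) * (t + y)) - / t.
Definition remainder_weight z p t := sqrt z * p / (sqrt (t + z) * (t + p)).
Definition remainder_integrand x y z p t :=
  (1 - remainder_weight z p t) * (/ t - / sqrt ((t + x) * (t + y))).

Lemma inv_mul_sqrt_add_sqrt z t : 0 < z -> 0 < t ->
  / (sqrt (t + z) * (sqrt (t + z) + sqrt z)) = / t - sqrt z / (t * sqrt (t + z)).
Proof.
  intros Hz Ht.
  assert (Hr : 0 < sqrt z) by (apply sqrt_lt_R0; lra).
  assert (HS : 0 < sqrt (t + z)) by (apply sqrt_lt_R0; lra).
  assert (Hrr := sqrt_sqrt z ltac:(lra)).
  assert (HSS := sqrt_sqrt (t + z) ltac:(lra)).
  set (r := sqrt z) in *. set (S := sqrt (t + z)) in *.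
  assert (Hrs : r < S) by nra.
  replace t with ((S - r) * (S + r)) by nra.
  field. lra.
Qed.

Section Carlson.

Variables x y z p : R.
Hypotheses (Hx : 0 <= x) (Hy : 0 <= y) (Hxy : 0 < x + y) (Hz : 0 < z) (Hp : 0 < p).

Local Notation a := ((x + y) / 2).
Local Notation g := (sqrt (x * y)).

Lemma log_primitive_derive t : 0 < t ->
  is_derive (log_primitive x y z) t (log_integrand x y z t).
Proof.
  intros Ht. unfold log_primitive, log_integrand.
  assert (0 < sqrt ((t + x) * (t + y))) by (apply sqrt_lt_R0; nra).
  assert (0 < sqrt (t + z)) by (apply sqrt_lt_R0; lra).
  assert (0 < sqrt z) by (apply sqrt_lt_R0; lra).
  auto_derive; [repeat split; nra|].
  replace (2 * (1 * / (2 * sqrt (t + z)) * / (sqrt (t + z) + sqrt z)))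
    with (/ (sqrt (t + z) * (sqrt (t + z) + sqrt z))) by (field; lra).
  rewrite inv_mul_sqrt_add_sqrt by assumption.
  field. repeat split; lra.
Qed.

Lemma log_primitive_at_0 :
  filterlim (log_primitive x y z) (at_right 0) (locally (ln (a + g) - 2 * ln (2 * sqrt z))).
Proof.
  assert (Hr : 0 < sqrt z) by (apply sqrt_lt_R0; lra).
  assert (Hg : 0 <= g) by apply sqrt_pos.
  replace (ln (a + g) - 2 * ln (2 * sqrt z)) with (log_primitive x y z 0).
  2:{ unfold log_primitive. rewrite !Rplus_0_l. do 3 f_equal. ring. }
  apply filterlim_at_right_continuous. unfold log_primitive.
  apply (continuous_minus (fun t => ln (t + a + sqrt ((t + x) * (t + y))))
                          (fun t => 2 * ln (sqrt (t + z) + sqrt z))).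
  - apply (continuous_comp (fun t => t + a + sqrt ((t + x) * (t + y))) ln).
    + apply (continuous_plus (fun t => t + a) (fun t => sqrt ((t + x) * (t + y)))).
      * apply (ex_derive_continuous (V := R_NormedModule)). auto_derive. exact I.
      * apply continuous_sqrt_comp, (ex_derive_continuous (V := R_NormedModule)).
        auto_derive. exact I.
    + apply continuous_ln. rewrite !Rplus_0_l. lra.
  - apply (ex_derive_continuous (V := R_NormedModule)). auto_derive.
    rewrite Rplus_0_l. repeat split; lra.
Qed.

Lemma log_primitive_at_pinfty :
  filterlim (log_primitive x y z) (Rbar_locally p_infty) (locally (ln 2)).
Proof.
  set (H := fun u => ln (1 + a * (u * u) + sqrt ((1 + x * (u * u)) * (1 + y * (u * u))))
                     - 2 * ln (sqrt (1 + z * (u * u)) + sqrt z * u)).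
  replace (ln 2) with (H 0).
  2:{ unfold H. rewrite !Rmult_0_r, !Rplus_0_r, Rmult_1_r, sqrt_1, ln_1.
      replace (1 + 1) with 2 by ring. ring. }
  apply filterlim_pinfty_inv_sqrt.
  - intros t Ht. unfold log_primitive, H. rewrite inv_sqrt_sqr by exact Ht.
    assert (Hs : 0 < sqrt t) by (apply sqrt_lt_R0; lra).
    assert (Hit : 0 < / t) by (apply Rinv_0_lt_compat; lra).
    assert (EQ : sqrt ((t + x) * (t + y)) = t * sqrt ((1 + x * / t) * (1 + y * / t))).
    { assert (0 <= x * / t) by (apply Rmult_le_pos; lra).
      assert (0 <= y * / t) by (apply Rmult_le_pos; lra).
      replace ((t + x) * (t + y)) with ((t * t) * ((1 + x * / t) * (1 + y * / t)))
        by (field; lra).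
      rewrite sqrt_mult, sqrt_square by nra. reflexivity. }
    assert (ES : sqrt (t + z) = sqrt t * sqrt (1 + z * / t)).
    { rewrite <- sqrt_mult by nra. f_equal. field. lra. }
    assert (Eln : ln t = 2 * ln (sqrt t)).
    { rewrite <- (sqrt_sqrt t) at 1 by lra. rewrite ln_mult by lra. ring. }
    assert (0 <= sqrt ((1 + x * / t) * (1 + y * / t))) by apply sqrt_pos.
    assert (0 < sqrt (1 + z * / t)) by (apply sqrt_lt_R0; nra).
    assert (0 <= a * / t) by (apply Rmult_le_pos; lra).
    assert (0 <= sqrt z * / sqrt t)
      by (apply Rmult_le_pos; [apply sqrt_pos | left; apply Rinv_0_lt_compat; lra]).
    replace (t + a + sqrt ((t + x) * (t + y)))
      with (t * (1 + a * / t + sqrt ((1 + x * / t) * (1 + y * / t))))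
      by (rewrite EQ; field; lra).
    replace (sqrt (t + z) + sqrt z)
      with (sqrt t * (sqrt (1 + z * / t) + sqrt z * / sqrt t)) by (rewrite ES; field; lra).
    rewrite !ln_mult by nra. lra.
  - apply (ex_derive_continuous (V := R_NormedModule)). unfold H. auto_derive.
    rewrite !Rmult_0_r, !Rplus_0_r, Rmult_1_r, sqrt_1. repeat split; lra.
Qed.

Lemma sqrt_mul_le_mean : g <= a.
Proof.
  assert (Hgg := sqrt_sqrt (x * y) ltac:(nra)).
  assert (0 <= g) by apply sqrt_pos.
  assert (0 <= (x - y) * (x - y)) by apply Rle_0_sqr.
  destruct (Rle_or_lt g a); [assumption | nra].
Qed.

Lemma is_RInt_0_pinfty_log_integrand :
  is_RInt_0_pinfty (log_integrand x y z) (ln (8 * z / (a + g))).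
Proof.
  assert (0 <= g) by apply sqrt_pos.
  replace (ln (8 * z / (a + g))) with (ln 2 - (ln (a + g) - 2 * ln (2 * sqrt z))).
  2:{ rewrite ln_div, !ln_mult by (try apply sqrt_lt_R0; lra).
      rewrite <- (sqrt_sqrt z) at 2 by lra. rewrite ln_mult by (apply sqrt_lt_R0; lra).
      replace 8 with (2 * (2 * 2)) by ring. rewrite !ln_mult by lra. ring. }
  apply is_RInt_0_pinfty_derive with (log_primitive x y z).
  - apply log_primitive_derive.
  - intros t Ht. apply (ex_derive_continuous (V := R_NormedModule)). unfold log_integrand.
    assert (0 < sqrt ((t + x) * (t + y))) by (apply sqrt_lt_R0; nra).
    assert (0 < sqrt (t + z)) by (apply sqrt_lt_R0; lra).
    auto_derive. repeat split; nra.
  - apply log_primitive_at_0.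
  - apply log_primitive_at_pinfty.
Qed.

Lemma sqrt_shift_bounds t : 0 < t ->
  t + g <= sqrt ((t + x) * (t + y)) <= t + a /\ t < sqrt ((t + x) * (t + y)).
Proof.
  intros Ht.
  assert (Hgg := sqrt_sqrt (x * y) ltac:(nra)).
  assert (0 <= g) by apply sqrt_pos.
  assert (g <= a) by apply sqrt_mul_le_mean.
  repeat split.
  - rewrite <- (sqrt_square (t + g)) by lra. apply sqrt_le_1_alt. nra.
  - rewrite <- (sqrt_square (t + a)) by lra. apply sqrt_le_1_alt. nra.
  - rewrite <- (sqrt_square t) at 1 by lra. apply sqrt_lt_1_alt. nra.
Qed.

Lemma inv_sub_inv_sqrt_bounds t : 0 < t ->
  0 < / t - / sqrt ((t + x) * (t + y)) /\
  g / (t * (t + g)) <= / t - / sqrt ((t + x) * (t + y)) <= a / (t * (t + a)).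
Proof.
  intros Ht.
  destruct (sqrt_shift_bounds t Ht) as [[Hlo Hhi] Hgt].
  assert (0 <= g) by apply sqrt_pos.
  set (Q := sqrt ((t + x) * (t + y))) in *.
  assert (E0 : / t - / Q = (Q - t) / (t * Q)) by (field; lra).
  assert (Eg : / t - / Q - g / (t * (t + g)) = (Q - t - g) / (Q * (t + g))) by (field; lra).
  assert (Ea : a / (t * (t + a)) - (/ t - / Q) = (t + a - Q) / (Q * (t + a))) by (field; lra).
  assert (0 < (Q - t) / (t * Q)) by (apply Rdiv_lt_0_compat; nra).
  assert (0 <= (Q - t - g) / (Q * (t + g)))
    by (apply Rmult_le_pos; [lra | left; apply Rinv_0_lt_compat; nra]).
  assert (0 <= (t + a - Q) / (Q * (t + a)))
    by (apply Rmult_le_pos; [lra | left; apply Rinv_0_lt_compat; nra]).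
  repeat split; lra.
Qed.

Lemma one_sub_remainder_weight_bounds t : 0 < t ->
  t / (t + p) < 1 - remainder_weight z p t < (1 + p / (2 * z)) * (t / (t + p)).
Proof.
  intros Ht. unfold remainder_weight.
  assert (Hr : 0 < sqrt z) by (apply sqrt_lt_R0; lra).
  assert (HS : 0 < sqrt (t + z)) by (apply sqrt_lt_R0; lra).
  assert (Hrr := sqrt_sqrt z ltac:(lra)).
  assert (HSS := sqrt_sqrt (t + z) ltac:(lra)).
  set (r := sqrt z) in *. set (S := sqrt (t + z)) in *.
  assert (Hrs : r < S) by nra.
  assert (Elo : 1 - r * p / (S * (t + p)) - t / (t + p) = p * (S - r) / (S * (t + p)))
    by (field; lra).
  assert (Ehi : (1 + p / (2 * z)) * (t / (t + p)) - (1 - r * p / (S * (t + p)))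
                = p * ((S - r) * (S - r) * (S + 2 * r)) / (2 * z * S * (t + p))).
  { rewrite <- Hrr. replace t with (S * S - r * r) by lra. field. nra. }
  assert (0 < p * (S - r) / (S * (t + p))) by (apply Rdiv_lt_0_compat; nra).
  assert (0 < p * ((S - r) * (S - r) * (S + 2 * r)) / (2 * z * S * (t + p))).
  { apply Rdiv_lt_0_compat; repeat apply Rmult_lt_0_compat; nra. }
  lra.
Qed.

Lemma remainder_integrand_gt t : 0 < t ->
  g / ((t + g) * (t + p)) < remainder_integrand x y z p t.
Proof.
  intros Ht. unfold remainder_integrand.
  destruct (inv_sub_inv_sqrt_bounds t Ht) as [Hpos [Hlo _]].
  destruct (one_sub_remainder_weight_bounds t Ht) as [Hk _].
  assert (0 <= g) by apply sqrt_pos.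
  replace (g / ((t + g) * (t + p))) with (t / (t + p) * (g / (t * (t + g)))) by (field; lra).
  apply Rle_lt_trans with (t / (t + p) * (/ t - / sqrt ((t + x) * (t + y)))).
  - apply Rmult_le_compat_l; [apply Rlt_le, Rdiv_lt_0_compat|]; lra.
  - apply Rmult_lt_compat_r; assumption.
Qed.

Lemma remainder_integrand_lt t : 0 < t ->
  remainder_integrand x y z p t < (1 + p / (2 * z)) * (a / ((t + a) * (t + p))).
Proof.
  intros Ht. unfold remainder_integrand.
  destruct (inv_sub_inv_sqrt_bounds t Ht) as [Hpos [_ Hhi]].
  destruct (one_sub_remainder_weight_bounds t Ht) as [Hk Hk'].
  assert (0 < t / (t + p)) by (apply Rdiv_lt_0_compat; lra).
  replace ((1 + p / (2 * z)) * (a / ((t + a) * (t + p))))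
    with ((1 + p / (2 * z)) * (t / (t + p)) * (a / (t * (t + a)))) by (field; lra).
  apply Rle_lt_trans with ((1 - remainder_weight z p t) * (a / (t * (t + a)))).
  - apply Rmult_le_compat_l; lra.
  - apply Rmult_lt_compat_r; [apply Rdiv_lt_0_compat; nra | assumption].
Qed.

Lemma remainder_integrand_continuous t : 0 < t -> continuous (remainder_integrand x y z p) t.
Proof.
  intros Ht. apply (ex_derive_continuous (V := R_NormedModule)).
  unfold remainder_integrand, remainder_weight.
  destruct (sqrt_shift_bounds t Ht) as [_ HQ].
  assert (0 < sqrt (t + z)) by (apply sqrt_lt_R0; lra).
  auto_derive. repeat split; nra.
Qed.

Lemma rj_integrand_identity t : 0 < t ->
  sqrt z * p * rj_integrand x y z p t + / z * rc_integrand 1 (p / z) (/ z * t)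
  - log_integrand x y z t = remainder_integrand x y z p t.
Proof.
  intros Ht.
  unfold rj_integrand, rc_integrand, log_integrand, remainder_integrand, remainder_weight.
  destruct (sqrt_shift_bounds t Ht) as [_ HQ].
  assert (HS : 0 < sqrt (t + z)) by (apply sqrt_lt_R0; lra).
  assert (Hr : 0 < sqrt z) by (apply sqrt_lt_R0; lra).
  assert (Hiz : 0 < / z) by (apply Rinv_0_lt_compat; lra).
  assert (Hscale : sqrt (t + z) = sqrt (/ z * t + 1) * sqrt z).
  { rewrite <- sqrt_mult by nra. f_equal. field. lra. }
  assert (0 < sqrt (/ z * t + 1)) by (apply sqrt_lt_R0; nra).
  rewrite sqrt_mult, Hscale by nra.
  field. repeat split; nra.
Qed.

Lemma RJ_decomposition d : is_RInt_0_pinfty (remainder_integrand x y z p) d ->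
  RJ x y z p = 3 / (2 * sqrt z * p) * (ln (8 * z / (a + g)) - 2 * RC 1 (p / z) + d).
Proof.
  intros Hd.
  assert (Hr : 0 < sqrt z) by (apply sqrt_lt_R0; lra).
  destruct (ex_RInt_0_pinfty_rc_integrand (p / z)) as [c Hc]; [apply Rdiv_lt_0_compat; lra|].
  assert (Hcz := is_RInt_0_pinfty_comp_scal _ c (/ z) ltac:(apply Rinv_0_lt_compat; lra) Hc).
  assert (Hlog := is_RInt_0_pinfty_log_integrand).
  set (L := ln (8 * z / (a + g))) in *.
  assert (HJ : is_RInt_0_pinfty (rj_integrand x y z p) (/ (sqrt z * p) * (d + L - c))).
  { apply is_RInt_0_pinfty_ext with
      (fun t => / (sqrt z * p) * (remainder_integrand x y z p t + log_integrand x y z t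
                                 - / z * rc_integrand 1 (p / z) (/ z * t))).
    - intros t Ht. rewrite <- rj_integrand_identity by exact Ht. field. lra.
    - exact (is_RInt_gen_scal _ (/ (sqrt z * p)) _
               (is_RInt_gen_minus _ _ _ _ (is_RInt_gen_plus _ _ _ _ Hd Hlog) Hcz)). }
  rewrite (RJ_is_RInt_0_pinfty _ _ _ _ _ HJ), (RC_is_RInt_0_pinfty _ _ _ Hc).
  field. lra.
Qed.

Hypothesis Hap : a < p.

Lemma ln_two_p_div_mean_gt0 : 0 < ln (2 * p / (a + g)).
Proof.
  assert (0 <= g) by apply sqrt_pos.
  assert (g <= a) by apply sqrt_mul_le_mean.
  rewrite <- ln_1. apply ln_increasing; [lra|].
  assert (E : 2 * p / (a + g) - 1 = (2 * p - (a + g)) / (a + g)) by (field; lra).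
  assert (0 < (2 * p - (a + g)) / (a + g)) by (apply Rdiv_lt_0_compat; lra).
  lra.
Qed.

Lemma ex_RInt_0_pinfty_remainder_integrand :
  exists d, is_RInt_0_pinfty (remainder_integrand x y z p) d.
Proof.
  apply ex_RInt_0_pinfty_le with
    (fun t => (1 + p / (2 * z)) * (a / ((t + a) * (t + p))))
    ((1 + p / (2 * z)) * (a / (p - a) * ln (p / a))).
  - apply remainder_integrand_continuous.
  - intros t Ht. assert (0 <= g) by apply sqrt_pos.
    apply Rlt_le, Rle_lt_trans with (g / ((t + g) * (t + p))).
    + apply Rmult_le_pos; [lra | left; apply Rinv_0_lt_compat; nra].
    + now apply remainder_integrand_gt.
  - intros t Ht. left. now apply remainder_integrand_lt.
  - intros t Ht. apply (ex_derive_continuous (V := R_NormedModule)). auto_derive. nra.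
  - apply (is_RInt_gen_scal (fun t => a / ((t + a) * (t + p))) (1 + p / (2 * z))).
    apply is_RInt_0_pinfty_inv_linear_prod. lra.
Qed.

Lemma remainder_integral_gt d : is_RInt_0_pinfty (remainder_integrand x y z p) d ->
  g / (p - g) * ln (2 * p / (a + g)) < d.
Proof.
  intros Hd.
  assert (0 <= g) by apply sqrt_pos.
  assert (g <= a) by apply sqrt_mul_le_mean.
  (* For g = 0 the value ln (p / g) is junk, but the bound reduces to 0 < d. *)
  destruct (Req_dec g 0) as [Hg0 | Hg0].
  - rewrite Hg0, Rdiv_0_l, Rmult_0_l.
    apply (is_RInt_0_pinfty_gt0 (remainder_integrand x y z p));
      [apply remainder_integrand_continuous | | exact Hd].
    intros t Ht. generalize (remainder_integrand_gt t Ht). rewrite Hg0, Rdiv_0_l. lra.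
  - apply Rle_lt_trans with (g / (p - g) * ln (p / g)).
    + apply Rmult_le_compat_l; [apply Rlt_le, Rdiv_lt_0_compat; lra|].
      apply ln_le; [apply Rdiv_lt_0_compat; lra|].
      assert (E : p / g - 2 * p / (a + g) = p * (a - g) / (g * (a + g))) by (field; lra).
      assert (0 <= p * (a - g) / (g * (a + g))); [|lra].
      apply Rmult_le_pos; [nra | left; apply Rinv_0_lt_compat; nra].
    + apply (is_RInt_0_pinfty_lt (fun t => g / ((t + g) * (t + p)))
                                 (remainder_integrand x y z p)); [| | | |exact Hd].
      * intros t Ht. apply (ex_derive_continuous (V := R_NormedModule)). auto_derive. nra.
      * apply remainder_integrand_continuous.
      * apply remainder_integrand_gt.
      * apply is_RInt_0_pinfty_inv_linear_prod. lra.
Qed.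

Lemma remainder_integral_lt d : is_RInt_0_pinfty (remainder_integrand x y z p) d ->
  d < (1 + p / (2 * z)) * (a / (p - a)) * ln (2 * p / (a + g)).
Proof.
  intros Hd.
  assert (0 <= g) by apply sqrt_pos.
  assert (g <= a) by apply sqrt_mul_le_mean.
  apply Rlt_le_trans with ((1 + p / (2 * z)) * (a / (p - a) * ln (p / a))).
  - apply (is_RInt_0_pinfty_lt (remainder_integrand x y z p)
             (fun t => (1 + p / (2 * z)) * (a / ((t + a) * (t + p))))); [| | | exact Hd |].
    + apply remainder_integrand_continuous.
    + intros t Ht. apply (ex_derive_continuous (V := R_NormedModule)). auto_derive. nra.
    + apply remainder_integrand_lt.
    + apply (is_RInt_gen_scal (fun t => a / ((t + a) * (t + p))) (1 + p / (2 * z))).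
      apply is_RInt_0_pinfty_inv_linear_prod. lra.
  - rewrite Rmult_assoc.
    assert (0 < p / (2 * z)) by (apply Rdiv_lt_0_compat; lra).
    apply Rmult_le_compat_l; [lra|].
    apply Rmult_le_compat_l; [apply Rlt_le, Rdiv_lt_0_compat; lra|].
    apply ln_le; [apply Rdiv_lt_0_compat; lra|].
    assert (E : 2 * p / (a + g) - p / a = p * (a - g) / (a * (a + g))) by (field; lra).
    assert (0 <= p * (a - g) / (a * (a + g))); [|lra].
    apply Rmult_le_pos; [nra | left; apply Rinv_0_lt_compat; nra].
Qed.

End Carlson.

Theorem mainTheorem12 (x y z p : R) :
  0 <= x -> 0 <= y -> ~ (x = 0 /\ y = 0) -> 0 < z -> 0 < p ->
  (x + y) / 2 < p ->
  let a := (x + y) / 2 in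
  let g := sqrt (x * y) in
  exists theta : R,
    g / (1 - g / p) < theta /\
    theta < a / (1 - a / p) * (1 + p / (2 * z)) /\
    RJ x y z p =
      3 / (2 * sqrt z * p) *
      (ln (8 * z / (a + g)) - 2 * RC 1 (p / z)
       + theta / p * ln (2 * p / (a + g))).
Proof.
  intros Hx Hy Hxy0 Hz Hp Hap a g. subst a g.
  assert (Hxy : 0 < x + y).
  { destruct (Rle_or_lt (x + y) 0); [exfalso; apply Hxy0; split|]; lra. }
  assert (0 <= sqrt (x * y)) by apply sqrt_pos.
  assert (sqrt (x * y) <= (x + y) / 2) by (apply sqrt_mul_le_mean; assumption).
  destruct (ex_RInt_0_pinfty_remainder_integrand x y z p) as [d Hd]; try assumption.
  assert (Hlo := remainder_integral_gt x y z p Hx Hy Hxy Hz Hp Hap d Hd).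
  assert (Hhi := remainder_integral_lt x y z p Hx Hy Hxy Hz Hp Hap d Hd).
  assert (HL := ln_two_p_div_mean_gt0 x y p Hx Hy Hxy Hap).
  set (L := ln (2 * p / ((x + y) / 2 + sqrt (x * y)))) in *.
  exists (p * d / L). repeat split.
  - replace (sqrt (x * y) / (1 - sqrt (x * y) / p))
      with (p * (sqrt (x * y) / (p - sqrt (x * y)))) by (field; lra).
    replace (p * d / L) with (p * (d / L)) by (field; lra).
    apply Rmult_lt_compat_l; [lra|]. apply (Rlt_div_r _ _ L); assumption.
  - replace ((x + y) / 2 / (1 - (x + y) / 2 / p) * (1 + p / (2 * z)))
      with (p * ((1 + p / (2 * z)) * ((x + y) / 2 / (p - (x + y) / 2)))) by (field; lra).
    replace (p * d / L) with (p * (d / L)) by (field; lra).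
    apply Rmult_lt_compat_l; [lra|]. apply (Rlt_div_l d _ L); assumption.
  - rewrite (RJ_decomposition x y z p Hx Hy Hxy Hz Hp d Hd). fold L.
    assert (0 < sqrt z) by (apply sqrt_lt_R0; lra).
    field. repeat split; lra.
Qed.
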